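(* Let $G$ be a finite abelian group of order $n$ and $S\subset G^n$ the set of bijections $\{1,\dots,n\}\to G$. If $\chi\in\hat G^n$ has exactly $m$ nontrivial coordinates, where $m\le n/2$, then \[ |\widehat{1_S}(\chi)|\le \binom{n}{m}^{-1/2}\frac{n!}{n^n}. \]
   Context: $\hat G$ is the dual group of $G$. For $\chi=(\chi_1,\dots,\chi_n)\in\hat G^n$, $\widehat{1_S}(\chi)=\frac{1}{n^n}\sum_{\pi\in S}\prod_{i=1}^n\chi_i(\pi(i))$. *)

From mathcomp Require Import all_boot all_order all_algebra all_field.
Set Implicit Arguments. Unset Strict Implicit. Unset Printing Implicit Defensive.
Import Order.TTheory GRing.Theory Num.Theory.
Local Open Scope ring_scope.

(* A finite abelian group G is modelled as a finZmodType (written additively).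
   The dual group: characters = homomorphisms G -> C^x, with C = algC. *)
Definition is_character (G : finZmodType) (chi : G -> algC) : Prop :=
  chi 0 = 1 /\ forall x y : G, chi (x + y) = chi x * chi y.

Definition trivial_char (G : finZmodType) (chi : G -> algC) : bool :=
  [forall x : G, chi x == 1].

Definition is_bij (G : finZmodType) (n : nat) (pi : {ffun 'I_n -> G}) : bool :=
  injectiveb pi && [forall g : G, exists i : 'I_n, pi i == g].

Definition hat1S (G : finZmodType) (n : nat) (chi : 'I_n -> G -> algC) : algC :=
  (n%:R ^+ n)^-1 * \sum_(pi : {ffun 'I_n -> G} | is_bij pi) \prod_(i < n) chi i (pi i).

From mathcomp Require Import all_boot all_order all_algebra all_field.
From mathcomp Require Import zify ring.
Import Order.TTheory GRing.Theory Num.Theory.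
Local Open Scope ring_scope.
Set Implicit Arguments. Unset Strict Implicit. Unset Printing Implicit Defensive.

(* Write P(c) for the sum over injections f : 'I_k -> G of prod_i c_i (f i), so
   that hat1S chi = n^-n P(chi), and let N = #|G|.  Summing out a trivial
   coordinate leaves N - (k - 1) free values for it.  For a nontrivial coordinate
   c_j, the values avoided by the other coordinates sum to minus the values they
   take, because c_j sums to zero over G; so P(c) is minus a sum of k - 1 sums
   in which c_j has been multiplied into one of the other coordinates.  By
   strong induction, if all k coordinates are nontrivial and 2k <= N then
   |P(c)| <= sqrt(k! N^_k): the condition 2k <= N pays for the k - 1 terms
   whether or not the merged coordinate becomes trivial.  Removing trivial
   coordinates first, with m nontrivial ones among N we get
   |P(c)| <= (N - m)! sqrt(m! N^_m) = N! / sqrt(C(N, m)). *)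

Lemma ler_nat_sqrtC (a x y : nat) :
  (a * a * x <= y)%N -> a%:R * sqrtC x%:R <= sqrtC (y%:R : algC).
Proof.
move=> le_aax_y; rewrite -[a%:R]sqrCK ?ler0n // -sqrtCM ?qualifE /= ?exprn_ge0 ?ler0n //.
by rewrite ler_sqrtC ?qualifE /= ?mulr_ge0 ?exprn_ge0 ?ler0n // -natrX -natrM ler_nat.
Qed.

Section InjectiveCharacterSums.
Variable G : finZmodType.
Local Notation N := #|G|.

Definition inj_sum k (c : 'I_k -> G -> algC) : algC :=
  \sum_(f : {ffun 'I_k -> G} | injectiveb f) \prod_(i < k) c i (f i).

Definition ffun_insert k (j : 'I_k.+1) (f : {ffun 'I_k -> G}) (g : G) :
    {ffun 'I_k.+1 -> G} :=
  [ffun i => if unlift j i is Some i' then f i' else g].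

Lemma ffun_insert_lift k j (f : {ffun 'I_k -> G}) g i :
  ffun_insert j f g (lift j i) = f i.
Proof. by rewrite ffunE liftK. Qed.

Lemma ffun_insert_at k j (f : {ffun 'I_k -> G}) g : ffun_insert j f g j = g.
Proof. by rewrite ffunE unlift_none. Qed.

Lemma injectiveb_insert k j (f : {ffun 'I_k -> G}) g :
  injectiveb (ffun_insert j f g) = injectiveb f && (g \notin [set f i | i : 'I_k]).
Proof.
apply/injectiveP/andP => [inj_fg | [/injectiveP inj_f g_new] x y].
  split.
    apply/injectiveP => x y fxy; apply: (lift_inj (h := j)); apply: inj_fg.
    by rewrite !ffun_insert_lift.
  apply/imsetP => -[i _ g_fi].
  have := inj_fg j (lift j i); rewrite ffun_insert_at ffun_insert_lift => /(_ g_fi).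
  by move/eqP; rewrite (negbTE (neq_lift _ _)).
case: (unliftP j x) => [x'|] ->; case: (unliftP j y) => [y'|] ->;
  rewrite ?ffun_insert_lift ?ffun_insert_at //.
- by move/inj_f ->.
- by move=> fx_g; case/negP: g_new; apply/imsetP; exists x'.
- by move=> g_fy; case/negP: g_new; apply/imsetP; exists y'.
Qed.

Lemma sum_injective_insert k (j : 'I_k.+1) (F : {ffun 'I_k.+1 -> G} -> algC) :
  \sum_(h : {ffun 'I_k.+1 -> G} | injectiveb h) F h =
  \sum_(f : {ffun 'I_k -> G} | injectiveb f)
     \sum_(g | g \notin [set f i | i : 'I_k]) F (ffun_insert j f g).
Proof.
rewrite pair_big_dep (reindex (fun p : {ffun 'I_k -> G} * G => ffun_insert j p.1 p.2)) /=.
  by apply: eq_bigl => -[f g]; rewrite injectiveb_insert.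
exists (fun h : {ffun 'I_k.+1 -> G} => ([ffun i => h (lift j i)], h j)).
  move=> [f g] _ /=; rewrite ffun_insert_at; congr pair.
  by apply/ffunP => i; rewrite ffunE ffun_insert_lift.
move=> h _; apply/ffunP => i; rewrite ffunE.
by case: (unliftP j i) => [i'|] ->; rewrite ?ffunE.
Qed.

Lemma prod_insert k (j : 'I_k.+1) (c : 'I_k.+1 -> G -> algC) f g :
  \prod_(i < k.+1) c i (ffun_insert j f g i) =
  c j g * \prod_(i < k) c (lift j i) (f i).
Proof.
rewrite (bigD1_ord j) //= ffun_insert_at; congr (_ * _).
by apply: eq_bigr => i _; rewrite ffun_insert_lift.
Qed.

Lemma inj_sum0 (c : 'I_0 -> G -> algC) : inj_sum c = 1.
Proof.
rewrite /inj_sum (big_pred1 [ffun=> 0]) ?big_ord0 // => f /=.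
by apply/injectiveP/eqP => [_ | _ []//]; apply/ffunP => -[].
Qed.

Lemma trivial_char_eq1 (chi : G -> algC) x : trivial_char chi -> chi x = 1.
Proof. by move/forallP/(_ x)/eqP. Qed.

Lemma is_character1 : is_character (fun _ : G => 1).
Proof. by split=> // x y; rewrite mulr1. Qed.

Lemma is_characterM (a b : G -> algC) :
  is_character a -> is_character b -> is_character (fun x => a x * b x).
Proof.
case=> a0 aD [b0 bD]; split=> [|x y]; first by rewrite a0 b0 mulr1.
by rewrite aD bD mulrACA.
Qed.

Lemma sum_character_eq0 (chi : G -> algC) :
  is_character chi -> ~~ trivial_char chi -> \sum_g chi g = 0.
Proof.
case=> _ chiD /forallPn[h chi_h_neq1].
have shift : \sum_g chi g = chi h * \sum_g chi g.
  rewrite mulr_sumr (reindex_inj (addrI h)) /=.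
  by apply: eq_bigr => g _; rewrite chiD.
have : (1 - chi h) * \sum_g chi g = 0 by rewrite mulrBl mul1r -shift subrr.
by move/eqP; rewrite mulf_eq0 subr_eq0 eq_sym (negbTE chi_h_neq1) => /eqP.
Qed.

Lemma inj_sum_trivial k (j : 'I_k.+1) (c : 'I_k.+1 -> G -> algC) :
  trivial_char (c j) -> inj_sum c = (N - k)%:R * inj_sum (fun i => c (lift j i)).
Proof.
move=> cj_triv; rewrite /inj_sum (sum_injective_insert j) mulr_sumr.
apply: eq_bigr => f /injectiveP inj_f.
under eq_bigr do rewrite prod_insert trivial_char_eq1 // mul1r.
rewrite sumr_const mulr_natl; congr (_ *+ _).
have := cardC [set f i | i : 'I_k]; rewrite card_imset // card_ord => <-.
by rewrite addKn; apply: eq_card => g; rewrite !inE.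
Qed.

Definition merge_char k (c : 'I_k.+1 -> G -> algC) (j : 'I_k.+1) (i0 : 'I_k) :
    'I_k -> G -> algC :=
  fun i x => c (lift j i) x * (if i == i0 then c j x else 1).

Lemma inj_sum_nontrivial k (j : 'I_k.+1) (c : 'I_k.+1 -> G -> algC) :
    is_character (c j) -> ~~ trivial_char (c j) ->
  inj_sum c = - \sum_(i0 < k) inj_sum (merge_char c j i0).
Proof.
move=> cj_char cj_nontriv; rewrite /inj_sum (sum_injective_insert j) exchange_big.
rewrite -sumrN; apply: eq_bigr => f /injectiveP inj_f.
under [LHS]eq_bigr do rewrite prod_insert.
rewrite -mulr_suml.
have -> : \sum_(g | g \notin [set f i | i : 'I_k]) c j g = - \sum_(i < k) c j (f i).
  have := sum_character_eq0 cj_char cj_nontriv.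
  rewrite (bigID (mem [set f i | i : 'I_k])) /= big_imset /=; last exact: in2W inj_f.
  by move/eqP; rewrite addrC addr_eq0 => /eqP.
rewrite mulNr mulr_suml; congr (- _); apply: eq_bigr => i0 _.
by rewrite /merge_char big_split /= -big_mkcond big_pred1_eq mulrC.
Qed.

Definition inj_sum_bound m : algC := sqrtC (m`! * N ^_ m)%:R.

Lemma ler_inj_sum_boundS k :
  (2 * k.+2 <= N)%N -> k.+1%:R * inj_sum_bound k.+1 <= inj_sum_bound k.+2.
Proof.
move=> le_2k_N; apply: ler_nat_sqrtC.
rewrite [k.+2`!]factS [N ^_ k.+2]ffactnSr; move: (k.+1`!) (N ^_ k.+1) => a b.
have : (k.+1 * k.+1 <= k.+2 * (N - k.+1))%N by nia.
by move/(leq_mul (leqnn (a * b))); nia.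
Qed.

Lemma ler_inj_sum_boundSS k :
  (2 * k.+2 <= N)%N -> k.+1%:R * ((N - k)%:R * inj_sum_bound k) <= inj_sum_bound k.+2.
Proof.
move=> le_2k_N; rewrite mulrA -natrM; apply: ler_nat_sqrtC.
rewrite [k.+2`!]factS [k.+1`!]factS [N ^_ k.+2]ffactnSr [N ^_ k.+1]ffactnSr.
move: (k`!) (N ^_ k) => a b.
have : (k.+1 * (N - k) <= k.+2 * (N - k.+1))%N by nia.
by move/(leq_mul (leqnn (a * b * k.+1 * (N - k)))); nia.
Qed.

Lemma merge_char_character k (c : 'I_k.+1 -> G -> algC) j i0 i :
  (forall i, is_character (c i)) -> is_character (merge_char c j i0 i).
Proof.
by move=> c_char; apply: is_characterM => //; case: (i == i0) => //; apply: is_character1.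
Qed.

Lemma trivial_merge_char_neq k (c : 'I_k.+1 -> G -> algC) j i0 i :
  i != i0 -> trivial_char (merge_char c j i0 i) = trivial_char (c (lift j i)).
Proof.
by move/negbTE=> ne_i_i0; apply: eq_forallb => x; rewrite /merge_char ne_i_i0 mulr1.
Qed.

Lemma norm_inj_sum_nontrivial k (c : 'I_k -> G -> algC) :
    (forall i, is_character (c i)) -> (forall i, ~~ trivial_char (c i)) ->
    (2 * k <= N)%N ->
  `|inj_sum c| <= inj_sum_bound k.
Proof.
elim/ltn_ind: k c => -[|[|k]] IH c c_char c_nontriv le_2k_N.
- by rewrite inj_sum0 /inj_sum_bound fact0 ffactn0 sqrtC1 normr1.
- by rewrite (inj_sum_nontrivial (j := ord0)) // big_ord0 oppr0 normr0 sqrtC_ge0 ler0n.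
have merge_bound i0 :
    k.+1%:R * `|inj_sum (merge_char c ord_max i0)| <= inj_sum_bound k.+2.
  have d_char i : is_character (merge_char c ord_max i0 i) by apply: merge_char_character.
  have [d_triv | d_nontriv] := boolP (trivial_char (merge_char c ord_max i0 i0)).
    apply: le_trans (ler_inj_sum_boundSS le_2k_N).
    rewrite (inj_sum_trivial d_triv) normrM normr_nat ler_wpM2l // ler_wpM2l //.
    apply: IH => // [i|]; last lia.
    by rewrite trivial_merge_char_neq ?c_nontriv // eq_sym neq_lift.
  apply: le_trans (ler_inj_sum_boundS le_2k_N).
  rewrite ler_wpM2l // IH // => [i|]; last lia.
  by have [-> //|/trivial_merge_char_neq ->] := eqVneq i i0.
rewrite (inj_sum_nontrivial (j := ord_max)) // normrN.
have k1_gt0 : (0 : algC) < k.+1%:R by rewrite ltr0n.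
rewrite -(ler_pM2l k1_gt0); apply: le_trans (ler_wpM2l (ltW k1_gt0) (ler_norm_sum _ _ _)) _.
rewrite mulr_sumr; apply: le_trans (ler_sum _ (fun i0 _ => merge_bound i0)) _.
by rewrite sumr_const card_ord mulr_natl.
Qed.

Definition num_nontrivial k (c : 'I_k -> G -> algC) : nat :=
  #|[set i | ~~ trivial_char (c i)]|.

Lemma num_nontrivial_le k (c : 'I_k -> G -> algC) : (num_nontrivial c <= k)%N.
Proof. by rewrite -[k in (_ <= k)%N]card_ord max_card. Qed.

Lemma num_nontrivial_all k (c : 'I_k -> G -> algC) :
  (forall i, ~~ trivial_char (c i)) -> num_nontrivial c = k.
Proof.
by move=> c_nontriv; rewrite -[RHS]card_ord; apply: eq_card => i; rewrite inE c_nontriv.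
Qed.

Lemma num_nontrivial_lift k j (c : 'I_k.+1 -> G -> algC) :
  trivial_char (c j) -> num_nontrivial (fun i => c (lift j i)) = num_nontrivial c.
Proof.
move=> cj_triv; rewrite /num_nontrivial -(card_imset _ (@lift_inj _ j)); apply: eq_card => i.
rewrite inE; case: (unliftP j i) => [i'|] ->.
  by rewrite mem_imset ?inE //; apply: lift_inj.
by rewrite cj_triv; apply/negbTE/imsetP => -[i' _ /eqP]; rewrite (negbTE (neq_lift _ _)).
Qed.

Lemma norm_inj_sum k (c : 'I_k -> G -> algC) (m := num_nontrivial c) :
    (forall i, is_character (c i)) -> (2 * m <= N)%N -> (k <= N)%N ->
  `|inj_sum c| <= ((N - m) ^_ (k - m))%:R * inj_sum_bound m.
Proof.
rewrite {}/m; elim: k c => [|k IH] c c_char le_2m_N le_k_N.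
  move: le_2m_N; rewrite num_nontrivial_all => [|[]//].
  by rewrite subnn ffactn0 mul1r; apply: norm_inj_sum_nontrivial => // -[].
have [j cj_triv|c_nontriv] := pickP (fun i => trivial_char (c i)); last first.
  move: le_2m_N; rewrite num_nontrivial_all => [|i]; last by rewrite c_nontriv.
  by rewrite subnn ffactn0 mul1r; apply: norm_inj_sum_nontrivial => // i; rewrite c_nontriv.
have le_m_k : (num_nontrivial c <= k)%N.
  by rewrite -(num_nontrivial_lift cj_triv) num_nontrivial_le.
have := IH _ (fun i => c_char (lift j i)); rewrite num_nontrivial_lift //.
move=> /(_ le_2m_N (ltnW le_k_N)) IHc.
rewrite (inj_sum_trivial cj_triv) normrM normr_nat subSn // ffactnSr natrM -mulrA mulrCA.
have -> : (N - num_nontrivial c - (k - num_nontrivial c) = N - k)%N by lia.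
by rewrite ler_wpM2l.
Qed.

End InjectiveCharacterSums.

Lemma is_bij_injectiveb (G : finZmodType) n (f : {ffun 'I_n -> G}) :
  #|G| = n -> is_bij f = injectiveb f.
Proof.
rewrite /is_bij => card_G; have [/injectiveP inj_f | //] := boolP (injectiveb f).
apply/forallP => g; apply/existsP.
have /codomP[i ->] : g \in codom f by apply: inj_card_onto; rewrite // card_ord card_G.
by exists i.
Qed.

Lemma hat1S_inj_sum (G : finZmodType) n (chi : 'I_n -> G -> algC) :
  #|G| = n -> hat1S chi = (n%:R ^+ n)^-1 * inj_sum chi.
Proof. by move=> card_G; congr (_ * _); apply: eq_bigl => f; rewrite is_bij_injectiveb. Qed.

Lemma fact_div_sqrt_bin n m : (m <= n)%N ->
  n`!%:R / sqrtC 'C(n, m)%:R = (n - m)`!%:R * sqrtC (m`! * n ^_ m)%:R :> algC.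
Proof.
move=> le_m_n; rewrite -(ffact_fact le_m_n) mulnC natrM -mulrA; congr (_ * _).
have bin_gt0 : 0 < sqrtC 'C(n, m)%:R :> algC by rewrite sqrtC_gt0 ltr0n bin_gt0.
apply: (canLR (mulfK (lt0r_neq0 bin_gt0))).
rewrite -sqrtCM ?qualifE /= ?ler0n // -natrM mulnC mulnA bin_ffact.
by rewrite natrM -expr2 sqrCK ?ler0n.
Qed.

Theorem lemma4p1 (G : finZmodType) (n : nat) (hn : #|G| = n)
  (chi : 'I_n -> G -> algC) (hchi : forall i, is_character (chi i))
  (m : nat)
  (hm : #|[set i : 'I_n | ~~ trivial_char (chi i)]| = m)
  (hmn : (2 * m <= n)%N) :
  `|hat1S chi| <= (sqrtC ('C(n, m))%:R)^-1 * ((n`!)%:R / (n%:R ^+ n)).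
Proof.
have := norm_inj_sum hchi; rewrite /num_nontrivial /inj_sum_bound hm hn => /(_ hmn (leqnn n)).
rewrite ffactnn -fact_div_sqrt_bin; last by lia.
rewrite hat1S_inj_sum // normrM ger0_norm ?invr_ge0 ?exprn_ge0 ?ler0n //.
have -> : (sqrtC 'C(n, m)%:R)^-1 * (n`!%:R / n%:R ^+ n)
          = n%:R ^- n * (n`!%:R / sqrtC 'C(n, m)%:R) :> algC by ring.
by apply: ler_wpM2l; rewrite invr_ge0 exprn_ge0.
Qed.
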